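(* Consider the event-triggered distributed estimator described in the context, and suppose: (i) the communication graph is connected, i.e. $\lambda_2(\mathcal{L})>0$; (ii) $G=\sum_{i=1}^N H_i^TH_i$ is full rank; (iii) the step sizes are $\alpha(t)=\frac{a}{(t+1)^{\tau_1}}$ and $\beta(t)=\frac{b}{(t+1)^{\tau_2}}$ with $a,b>0$, $0<\tau_2\le\tau_1\le 1$, and $\tau_1>\max\{\tau_2+\frac{1}{2+\epsilon_1},0.5\}$, where $\epsilon_1>0$ is such that $\mathbb{E}\{\|V(t)\|^{2+\epsilon_1}\}<\infty$. Let $\rho_0=\min_{j\in\mathcal{V}}\rho_j$. If $\rho_0>\tau_1-\tau_2$, then for every agent $i\in\mathcal{V}$ the estimate sequence is asymptotically unbiased: $\lim_{t\to\infty}\mathbb{E}\{x_i(t)\}=\theta$.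
   Context: An unknown parameter $\theta\in\mathbb{R}^n$ is observed by $N$ agents $\mathcal{V}=\{1,\dots,N\}$ via $y_i(t)=H_i\theta+v_i(t)$, $t=0,1,2,\dots$, where $H_i\in\mathbb{R}^{m_i\times n}$ is known and the noise $v_i(t)\in\mathbb{R}^{m_i}$ is zero mean with covariance $R_i$. The stacked noise $V(t)=[v_1(t)^T,\dots,v_N(t)^T]^T$ is i.i.d. over time (noises of different agents at the same time may be correlated). Agents communicate over an undirected graph without self-loops with adjacency matrix $\mathcal{A}=[a_{ij}]\in\{0,1\}^{N\times N}$, neighbor sets $\mathcal{N}_i=\{j: a_{ij}=1\}$, degree matrix $\mathcal{D}$ and Laplacian $\mathcal{L}=\mathcal{D}-\mathcal{A}$. Each agent $i$ has a threshold exponent $\rho_i>0$. Agent $i$ keeps an estimate $x_i(t)\in\mathbb{R}^n$ (arbitrary deterministic initial value $x_i(0)$, which is the first transmitted value). Let $t_k^i$ be the latest triggering (transmission) time of agent $i$. At time $t$, agent $i$ triggers (broadcasts $x_i(t)$ to its neighbors, which then becomes its latest transmitted value) iff $\|x_i(t)-x_i(t_k^i)\|>\frac{1}{(t+1)^{\rho_i}}$. Denoting by $x_j(t_k^j)$ the latest value transmitted by agent $j$ up to and including time $t$, the estimator is $x_i(t+1)=x_i(t)+\alpha(t)H_i^T\big(y_i(t)-H_ix_i(t)\big)+\beta(t)\sum_{j\in\mathcal{N}_i}\big(x_j(t_k^j)-x_i(t)\big)$. *)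

From HB Require Import structures.
From mathcomp Require Import all_boot all_order all_algebra.
From mathcomp Require Import all_classical all_reals all_analysis.
Set Implicit Arguments. Unset Strict Implicit. Unset Printing Implicit Defensive.
Import Order.TTheory GRing.Theory Num.Theory.
Import numFieldNormedType.Exports.
Local Open Scope classical_set_scope.
Local Open Scope ring_scope.

Definition enorm (R : realType) (k : nat) (x : 'cV[R]_k) : R :=
  Num.sqrt (\sum_(j < k) x j 0 ^+ 2).

Definition stacked_norm (R : realType) (N : nat) (m : 'I_N -> nat)
  (v : forall i : 'I_N, 'cV[R]_(m i)) : R :=
  Num.sqrt (\sum_(i < N) \sum_(k < m i) v i k 0 ^+ 2).

Definition step_size (R : realType) (c tau : R) (t : nat) : R :=
  c / ((t.+1)%:R `^ tau).

(* Pathwise event-triggered estimator: given a noise realisation v,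
   et_est ... t = (x(t), xhat(t)), where xhat_i(t) is the latest value
   transmitted by agent i up to and including time t. *)
Fixpoint et_est (R : realType) (N n : nat) (m : 'I_N -> nat)
  (H : forall i : 'I_N, 'M[R]_(m i, n)) (adj : rel 'I_N) (rho : 'I_N -> R)
  (alpha beta : nat -> R) (theta : 'cV[R]_n) (x0 : 'I_N -> 'cV[R]_n)
  (v : nat -> forall i : 'I_N, 'cV[R]_(m i)) (t : nat)
  : ('I_N -> 'cV[R]_n) * ('I_N -> 'cV[R]_n) :=
  match t with
  | 0 => (x0, x0)
  | s.+1 =>
    let: (x, xh) := et_est H adj rho alpha beta theta x0 v s in
    let x' := fun i : 'I_N =>
      x i + alpha s *: ((H i)^T *m ((H i *m theta + v s i) - H i *m x i))
          + beta s *: \sum_(j < N | adj i j) (xh j - x i) in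
    let xh' := fun i : 'I_N =>
      if 1 / ((s.+2)%:R `^ rho i) < enorm (x' i - xh i) then x' i else xh i in
    (x', xh')
  end.

Definition rect_event (T R : Type) (N : nat) (m : 'I_N -> nat)
  (V : T -> forall i : 'I_N, 'cV[R]_(m i))
  (B : forall i : 'I_N, 'I_(m i) -> set R) : set T :=
  [set w | forall (i : 'I_N) (k : 'I_(m i)), B i k (V w i k 0)].

(* mutual independence of the random vectors V(t), t in nat
   (product rule on every finite family of measurable rectangles,
   which generate sigma(V(t))) *)
Definition mutually_independent_vecs (R : realType) (d : measure_display)
  (T : measurableType d) (P : probability T R) (N : nat) (m : 'I_N -> nat)
  (V : nat -> T -> forall i : 'I_N, 'cV[R]_(m i)) : Prop :=
  forall (s : seq nat) (B : nat -> forall i : 'I_N, 'I_(m i) -> set R),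
    uniq s ->
    (forall t i k, measurable (B t i k)) ->
    P [set w | forall t, t \in s -> rect_event (V t) (B t) w] =
    (\prod_(t <- s) P (rect_event (V t) (B t)))%E.

Definition identically_distributed_vecs (R : realType) (d : measure_display)
  (T : measurableType d) (P : probability T R) (N : nat) (m : 'I_N -> nat)
  (V : nat -> T -> forall i : 'I_N, 'cV[R]_(m i)) : Prop :=
  forall (t : nat) (B : forall i : 'I_N, 'I_(m i) -> set R),
    (forall i k, measurable (B i k)) ->
    P (rect_event (V t) B) = P (rect_event (V 0%N) B).

From HB Require Import structures.
From mathcomp Require Import all_boot all_order all_algebra.
From mathcomp Require Import all_classical all_reals all_analysis.
From mathcomp Require Import measurable_realfun.
From mathcomp.algebra_tactics Require Import ring lra.
Import Order.TTheory GRing.Theory Num.Theory.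
Import numFieldNormedType.Exports.
Set Implicit Arguments. Unset Strict Implicit. Unset Printing Implicit Defensive.
Local Open Scope classical_set_scope.
Local Open Scope ring_scope.

(* The update of [x_i] is affine in the states, the last broadcast values and
   the noise, so taking expectations removes the zero-mean noise: the mean
   errors [e_i(t) = E x_i(t) - theta] follow the deterministic
   consensus + innovations recursion
     e_i(t+1) = e_i(t) - al(t) H_i^T H_i e_i(t) - be(t) (L e(t))_i
                + be(t) sum_{j ~ i} d_j(t),
   driven by the mean triggering gaps [d_j(t) = E (xhat_j(t) - x_j(t))], which
   the triggering rule bounds by [(t+1)^-rho_j].  Connectivity and the rank of
   [G] make [sum_i |H_i z_i|^2 + c sum_{i~j} |z_i - z_j|^2] coercive, so
   [sum_i |e_i|^2] contracts by [1 - lam al(t) / 2] per step up to an error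
   [al(t) o(1)], because [be(t) (t+1)^-rho_j = o(al(t))] when
   [rho_j > tau1 - tau2].  Since [sum_t al(t)] diverges, [e(t) -> 0]. *)

(** * Column vectors *)

Section ColumnDot.
Variable R : realFieldType.

Lemma sqr_sum_le (I : finType) (P : pred I) (x : I -> R) :
  (\sum_(i | P i) x i) ^+ 2 <= #|I|%:R * \sum_(i | P i) x i ^+ 2.
Proof.
rewrite big_mkcond (big_mkcond P).
set y := fun i => if P i then x i else 0.
have -> : \sum_i (if P i then x i ^+ 2 else 0) = \sum_i y i ^+ 2.
  by apply: eq_bigr => i _; rewrite /y; case: (P i); rewrite ?expr0n.
have pair_le i j : y i * y j *+ 2 <= y i ^+ 2 + y j ^+ 2.
  by have := sqr_ge0 (y i - y j); rewrite mulr2n; nra.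
have sum_pairs : \sum_i \sum_j y i * y j *+ 2 <= \sum_i \sum_(j : I) (y i ^+ 2 + y j ^+ 2).
  by apply: ler_sum => i _; apply: ler_sum => j _; exact: pair_le.
have lhsE : \sum_i \sum_j y i * y j *+ 2 = (\sum_i y i) ^+ 2 *+ 2.
  by rewrite expr2 mulr_suml -sumrMnl; apply: eq_bigr => i _; rewrite mulr_sumr -sumrMnl.
have rhsE : \sum_i \sum_(j : I) (y i ^+ 2 + y j ^+ 2) = (#|I|%:R * \sum_i y i ^+ 2) *+ 2.
  rewrite (eq_bigr (fun i => y i ^+ 2 *+ #|I| + \sum_j y j ^+ 2)); last first.
    by move=> i _; rewrite big_split /= sumr_const.
  by rewrite big_split /= sumr_const -sumrMnl mulr_natl mulr2n sumrMnl.
by move: sum_pairs; rewrite lhsE rhsE !mulr2n; lra.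
Qed.

Definition dotc n (u v : 'cV[R]_n) : R := \sum_k u k 0 * v k 0.

Section Dot.
Variable n : nat.
Implicit Types u v w : 'cV[R]_n.

Lemma dotcC u v : dotc u v = dotc v u.
Proof. by apply: eq_bigr => k _; rewrite mulrC. Qed.

Lemma dotcDl u v w : dotc (u + v) w = dotc u w + dotc v w.
Proof. by rewrite /dotc -big_split; apply: eq_bigr => k _; rewrite mxE mulrDl. Qed.

Lemma dotcZl c u v : dotc (c *: u) v = c * dotc u v.
Proof. by rewrite /dotc mulr_sumr; apply: eq_bigr => k _; rewrite mxE mulrA. Qed.

Lemma dotcNl u v : dotc (- u) v = - dotc u v.
Proof. by rewrite -scaleN1r dotcZl mulN1r. Qed.

Lemma dotcBl u v w : dotc (u - v) w = dotc u w - dotc v w.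
Proof. by rewrite dotcDl dotcNl. Qed.

Lemma dotcDr u v w : dotc w (u + v) = dotc w u + dotc w v.
Proof. by rewrite dotcC dotcDl !(dotcC w). Qed.

Lemma dotcZr c u v : dotc v (c *: u) = c * dotc v u.
Proof. by rewrite dotcC dotcZl dotcC. Qed.

Lemma dotcNr u v : dotc v (- u) = - dotc v u.
Proof. by rewrite dotcC dotcNl dotcC. Qed.

Lemma dotcBr u v w : dotc w (u - v) = dotc w u - dotc w v.
Proof. by rewrite dotcDr dotcNr. Qed.

Lemma dotc0 : dotc (0 : 'cV[R]_n) 0 = 0.
Proof. by rewrite /dotc big1 // => k _; rewrite mxE mul0r. Qed.

Lemma dotcc_opp u : dotc (- u) (- u) = dotc u u.
Proof. by rewrite dotcNl dotcNr opprK. Qed.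

Lemma dotcc_ge0 u : 0 <= dotc u u.
Proof. by apply: sumr_ge0 => k _; rewrite -expr2 sqr_ge0. Qed.

Lemma dotc_suml (I : finType) (P : pred I) (u : I -> 'cV[R]_n) v :
  dotc (\sum_(i | P i) u i) v = \sum_(i | P i) dotc (u i) v.
Proof.
rewrite /dotc exchange_big /=; apply: eq_bigr => k _.
by rewrite summxE mulr_suml.
Qed.

Lemma dotc_mulmxr p (M : 'M[R]_(p, n)) (u : 'cV[R]_p) v :
  dotc u (M *m v) = dotc (M^T *m u) v.
Proof.
have dotcE q (x y : 'cV[R]_q) : dotc x y = (x^T *m y) 0 0.
  by rewrite mxE; apply: eq_bigr => k _; rewrite mxE.
by rewrite !dotcE trmx_mul trmxK mulmxA.
Qed.

Lemma dotcc_coord_le u k : u k 0 ^+ 2 <= dotc u u.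
Proof.
rewrite /dotc (bigD1 k) //= -expr2 lerDl.
by apply: sumr_ge0 => l _; rewrite -expr2 sqr_ge0.
Qed.

Lemma dotcc_sum_le (I : finType) (P : pred I) (u : I -> 'cV[R]_n) :
  dotc (\sum_(i | P i) u i) (\sum_(i | P i) u i)
    <= #|I|%:R * \sum_(i | P i) dotc (u i) (u i).
Proof.
rewrite /dotc [X in _ <= _ * X]exchange_big /= mulr_sumr; apply: ler_sum => k _.
by rewrite summxE -expr2 (le_trans (sqr_sum_le _ _)) // ler_wpM2l.
Qed.

Lemma dotccD_le u v (eta : R) : 0 < eta ->
  dotc (u + v) (u + v) <= (1 + eta) * dotc u u + (1 + eta^-1) * dotc v v.
Proof.
move=> eta_gt0; have := dotcc_ge0 (eta *: u - v).
rewrite !(dotcDl, dotcDr, dotcNl, dotcNr, dotcZl, dotcZr) (dotcC v u).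
have : eta * eta^-1 = 1 by rewrite divff // gt_eqF.
have := dotcc_ge0 u; have := dotcc_ge0 v; nra.
Qed.

Lemma dotccD_le2 u v : dotc (u + v) (u + v) <= 2 * dotc u u + 2 * dotc v v.
Proof. by have := dotccD_le u v ltr01; rewrite invr1. Qed.

End Dot.

Definition frob2 p q (M : 'M[R]_(p, q)) : R := \sum_k \sum_l M k l ^+ 2.

Lemma frob2_ge0 p q (M : 'M[R]_(p, q)) : 0 <= frob2 M.
Proof. by do 2 (apply: sumr_ge0 => ? _); exact: sqr_ge0. Qed.

Lemma dotcc_mulmx_le p q (M : 'M[R]_(p, q)) (u : 'cV[R]_q) :
  dotc (M *m u) (M *m u) <= q%:R * frob2 M * dotc u u.
Proof.
apply: (@le_trans _ _ (\sum_k (q%:R * \sum_l M k l ^+ 2) * dotc u u)); last first.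
  by rewrite -mulr_suml -mulr_sumr.
apply: ler_sum => k _; rewrite -expr2 mxE.
apply: (le_trans (sqr_sum_le _ _)); rewrite card_ord -mulrA ler_wpM2l //.
rewrite mulr_suml; apply: ler_sum => l _.
by rewrite exprMn ler_wpM2l ?sqr_ge0 // dotcc_coord_le.
Qed.

End ColumnDot.

(** * Energies of a consensus + innovations network *)

Lemma ler_sum_term (R : numDomainType) (I : finType) (P : pred I) (F : I -> R) j :
  P j -> (forall i, P i -> 0 <= F i) -> F j <= \sum_(i | P i) F i.
Proof.
move=> Pj F_ge0; rewrite (bigD1 j) //= lerDl.
by apply: sumr_ge0 => i /andP[Pi _]; exact: F_ge0.
Qed.

Section Network.
Variables (R : realFieldType) (N n : nat) (m : 'I_N -> nat).
Variable H : forall i : 'I_N, 'M[R]_(m i, n).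
Variable adj : rel 'I_N.
Hypothesis adj_sym : forall i j, adj i j = adj j i.
Implicit Types z y : 'I_N -> 'cV[R]_n.

Definition stacked_sqnorm z := \sum_i dotc (z i) (z i).
Definition laplacian z i := \sum_(j | adj i j) (z i - z j).
Definition gram z i := (H i)^T *m (H i *m z i).
Definition obs_energy z := \sum_i dotc (H i *m z i) (H i *m z i).
Definition dirichlet z := \sum_i \sum_(j | adj i j) dotc (z i - z j) (z i - z j).
Definition gram_gain := \sum_i (m i)%:R * frob2 (H i)^T.

Lemma stacked_sqnorm_ge0 z : 0 <= stacked_sqnorm z.
Proof. by apply: sumr_ge0 => i _; exact: dotcc_ge0. Qed.

Lemma obs_energy_ge0 z : 0 <= obs_energy z.
Proof. by apply: sumr_ge0 => i _; exact: dotcc_ge0. Qed.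

Lemma dirichlet_ge0 z : 0 <= dirichlet z.
Proof. by do 2 (apply: sumr_ge0 => ? _); exact: dotcc_ge0. Qed.

Lemma gram_gain_ge0 : 0 <= gram_gain.
Proof. by apply: sumr_ge0 => i _; apply: mulr_ge0 => //; exact: frob2_ge0. Qed.

Lemma stacked_sqnormD_le z y (eta : R) : 0 < eta ->
  stacked_sqnorm (fun i => z i + y i)
    <= (1 + eta) * stacked_sqnorm z + (1 + eta^-1) * stacked_sqnorm y.
Proof.
move=> eta_gt0; rewrite /stacked_sqnorm !mulr_sumr -big_split /=.
by apply: ler_sum => i _; exact: dotccD_le.
Qed.

Lemma dotc_gram z : \sum_i dotc (z i) (gram z i) = obs_energy z.
Proof. by apply: eq_bigr => i _; rewrite /gram dotc_mulmxr trmxK. Qed.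

(* Each edge is counted twice in the symmetric sum. *)
Lemma dotc_laplacian z : (\sum_i dotc (z i) (laplacian z i)) *+ 2 = dirichlet z.
Proof.
have -> : \sum_i dotc (z i) (laplacian z i)
    = \sum_i \sum_(j | adj i j) dotc (z i) (z i - z j).
  apply: eq_bigr => i _; rewrite /laplacian dotcC dotc_suml.
  by apply: eq_bigr => j _; rewrite dotcC.
have swap (F : 'I_N -> 'I_N -> R) :
    \sum_i \sum_(j | adj i j) F i j = \sum_i \sum_(j | adj i j) F j i.
  rewrite (exchange_big_dep xpredT) //=; apply: eq_bigr => i _.
  by apply: eq_bigl => j; rewrite adj_sym.
rewrite mulr2n {2}swap -big_split /=; apply: eq_bigr => i _.
rewrite -big_split /=; apply: eq_bigr => j _.
by rewrite !(dotcBl, dotcBr) (dotcC (z j) (z i)); ring.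
Qed.

Lemma stacked_sqnorm_laplacian_le z :
  stacked_sqnorm (laplacian z) <= N%:R * dirichlet z.
Proof.
rewrite /stacked_sqnorm /dirichlet mulr_sumr; apply: ler_sum => i _.
by rewrite /laplacian (le_trans (dotcc_sum_le _ _)) // card_ord.
Qed.

Lemma stacked_sqnorm_gram_le z : stacked_sqnorm (gram z) <= gram_gain * obs_energy z.
Proof.
rewrite /stacked_sqnorm /obs_energy mulr_sumr; apply: ler_sum => i _.
apply: (le_trans (dotcc_mulmx_le _ _)); rewrite ler_wpM2r ?dotcc_ge0 //.
apply: (@ler_sum_term _ _ xpredT (fun j => (m j)%:R * frob2 (H j)^T)) => // j _.
by apply: mulr_ge0 => //; exact: frob2_ge0.
Qed.

Lemma stacked_sqnorm_step z (al be : R) :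
  stacked_sqnorm (fun i => z i - al *: gram z i - be *: laplacian z i)
    = stacked_sqnorm z - 2 * al * obs_energy z - be * dirichlet z
      + stacked_sqnorm (fun i => al *: gram z i + be *: laplacian z i).
Proof.
have termE i :
    dotc (z i - al *: gram z i - be *: laplacian z i) (z i - al *: gram z i - be *: laplacian z i)
    = dotc (z i) (z i) - 2 * al * dotc (z i) (gram z i)
      - be * dotc (z i) (laplacian z i) *+ 2
      + dotc (al *: gram z i + be *: laplacian z i) (al *: gram z i + be *: laplacian z i).
  rewrite !(dotcDl, dotcDr, dotcNl, dotcNr, dotcZl, dotcZr).
  by rewrite (dotcC (gram z i)) (dotcC (laplacian z i)); ring.
rewrite /stacked_sqnorm (eq_bigr _ (fun i _ => termE i)) big_split /= !sumrB.
by rewrite sumrMnl -!mulr_sumr -mulrnAr dotc_gram dotc_laplacian.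
Qed.

Lemma stacked_sqnorm_increment_le z (al be : R) :
  stacked_sqnorm (fun i => al *: gram z i + be *: laplacian z i)
    <= 2 * al ^+ 2 * gram_gain * obs_energy z + 2 * be ^+ 2 * N%:R * dirichlet z.
Proof.
apply: (@le_trans _ _ (2 * al ^+ 2 * stacked_sqnorm (gram z)
                       + 2 * be ^+ 2 * stacked_sqnorm (laplacian z))).
  rewrite /stacked_sqnorm !mulr_sumr -big_split /=; apply: ler_sum => i _.
  by rewrite (le_trans (dotccD_le2 _ _)) // !dotcZl !dotcZr !expr2 !mulrA.
apply: lerD; rewrite -[X in _ <= X]mulrA; apply: ler_wpM2l.
- by rewrite mulr_ge0 ?sqr_ge0.
- exact: stacked_sqnorm_gram_le.
- by rewrite mulr_ge0 ?sqr_ge0.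
- exact: stacked_sqnorm_laplacian_le.
Qed.

Lemma consensus_innovation_error z zh (theta : 'cV[R]_n) (al be : R) i :
  z i + al *: ((H i)^T *m (H i *m theta - H i *m z i))
      + be *: \sum_(j | adj i j) (zh j - z i) - theta
    = (z i - theta) - al *: gram (fun j => z j - theta) i
      - be *: laplacian (fun j => z j - theta) i + be *: \sum_(j | adj i j) (zh j - z j).
Proof.
have -> : \sum_(j | adj i j) (zh j - z i) = \sum_(j | adj i j) (zh j - z j)
    - \sum_(j | adj i j) ((z i - theta) - (z j - theta)).
  by rewrite -sumrB; apply: eq_bigr => j _; apply/matrixP => k l; rewrite !mxE; ring.
rewrite /gram /laplacian !mulmxBr; apply/matrixP => k l; rewrite !mxE; ring.
Qed.

Definition coercive (lam c : R) :=
  forall z, lam * stacked_sqnorm z <= obs_energy z + c * dirichlet z.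

(* The increment is absorbed by half the decrease [2 al obs + be dirichlet]. *)
Lemma stacked_sqnorm_contraction (lam c al be : R) z :
  coercive lam c -> 0 <= al -> 0 <= be ->
  al * gram_gain <= 1 / 2 -> be * N%:R <= 1 / 4 -> 2 * c * al <= be ->
  stacked_sqnorm (fun i => z i - al *: gram z i - be *: laplacian z i)
    <= (1 - al * lam) * stacked_sqnorm z.
Proof.
move=> coer al_ge0 be_ge0 al_small be_small c_le.
rewrite stacked_sqnorm_step.
have := stacked_sqnorm_increment_le z al be.
have := coer z; have := obs_energy_ge0 z; have := dirichlet_ge0 z.
set Q := obs_energy z; set D := dirichlet z => D0 Q0 coer_z increment_le.
have gram_term_le : 2 * al ^+ 2 * gram_gain * Q <= al * Q.
  by have := mulr_ge0 al_ge0 Q0; nra.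
have laplacian_term_le : 2 * be ^+ 2 * N%:R * D <= be / 2 * D.
  by have := mulr_ge0 be_ge0 D0; nra.
have cD_le : c * al * D <= be / 2 * D by apply: ler_wpM2r => //; lra.
have coer_al : al * (lam * stacked_sqnorm z) <= al * (Q + c * D) by exact: ler_wpM2l.
nra.
Qed.

Lemma dirichlet_edge_le z i j : adj i j -> dotc (z j - z i) (z j - z i) <= dirichlet z.
Proof.
move=> aij; have term_ge0 k : 0 <= \sum_(l | adj k l) dotc (z k - z l) (z k - z l).
  by apply: sumr_ge0 => l _; exact: dotcc_ge0.
apply: le_trans (@ler_sum_term _ _ xpredT _ j _ (fun k _ => term_ge0 k)) => //.
apply: (@ler_sum_term _ _ (adj j) (fun l => dotc (z j - z l) (z j - z l))).
  by rewrite adj_sym.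
by move=> l _; exact: dotcc_ge0.
Qed.

Lemma dirichlet_path_le x p : path adj x p -> exists2 K, 0 <= K &
  forall z, dotc (z (last x p) - z x) (z (last x p) - z x) <= K * dirichlet z.
Proof.
elim: p x => [|y p IH] x /=.
  by move=> _; exists 0 => // z; rewrite subrr dotc0 mul0r.
move=> /andP[axy /IH[K K0 hK]]; exists (2 * K + 2); first by lra.
move=> z; rewrite -[z (last y p) - z x](subrKA (z y)).
apply: (le_trans (dotccD_le2 _ _)).
by have := hK z; have := dirichlet_edge_le z axy; have := dirichlet_ge0 z; nra.
Qed.

Hypothesis adj_connected : forall i j, connect adj i j.

Lemma dirichlet_spread_le (r : 'I_N) : exists2 K, 0 <= K &
  forall z i, dotc (z i - z r) (z i - z r) <= K * dirichlet z.
Proof.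
have /choice[K hK] i : exists K, 0 <= K /\
    forall z, dotc (z i - z r) (z i - z r) <= K * dirichlet z.
  have /connectP[p pp ->] := adj_connected r i.
  by have [K K0 hK] := dirichlet_path_le pp; exists K.
have K_ge0 i : 0 <= K i by case: (hK i).
exists (\sum_i K i) => [|z i]; first exact: sumr_ge0.
have [_ /(_ z) hKi] := hK i; apply: le_trans hKi _.
by rewrite ler_wpM2r ?dirichlet_ge0 // (@ler_sum_term _ _ xpredT).
Qed.

Lemma unitmx_dotcc_le p (G : 'M[R]_p) : G \in unitmx ->
  exists2 K, 0 <= K & forall x, dotc x x <= K * dotc (G *m x) (G *m x).
Proof.
move=> G_unit; exists (p%:R * frob2 (invmx G)); first by rewrite mulr_ge0 ?frob2_ge0.
by move=> x; rewrite -{1 2}[x](mulKmx G_unit); exact: dotcc_mulmx_le.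
Qed.

Hypothesis gram_full_rank : \rank (\sum_(i < N) (H i)^T *m H i)%R = n.

Lemma obs_coercive : exists2 K, 0 <= K &
  forall x : 'cV[R]_n, dotc x x <= K * \sum_i dotc (H i *m x) (H i *m x).
Proof.
pose G := \sum_(i < N) (H i)^T *m H i.
have G_unit : G \in unitmx by rewrite -row_free_unit; apply/eqP; exact: gram_full_rank.
have [K K0 hK] := unitmx_dotcc_le G_unit.
exists (K * (N%:R * gram_gain)); first by rewrite !mulr_ge0 ?gram_gain_ge0.
move=> x; apply: (le_trans (hK x)); rewrite -mulrA ler_wpM2l //.
have -> : G *m x = \sum_i gram (fun=> x) i.
  by rewrite /G mulmx_suml; apply: eq_bigr => i _; rewrite /gram mulmxA.
apply: (le_trans (dotcc_sum_le _ _)); rewrite card_ord -mulrA ler_wpM2l //.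
exact: (stacked_sqnorm_gram_le (fun=> x)).
Qed.

(* Pin down a reference node [r]: the spread around [z r] is controlled by the
   Dirichlet energy, and [z r] itself by the observations, by full rank. *)
Lemma stacked_sqnorm_le_obs_dirichlet : exists A1 A2, [/\ 0 <= A1, 0 <= A2 &
  forall z, stacked_sqnorm z <= A1 * obs_energy z + A2 * dirichlet z].
Proof.
have [r _ | no_node] := pickP (@predT 'I_N); last first.
  by exists 0, 0; split => // z; rewrite /stacked_sqnorm big_pred0 // !mul0r addr0.
have [K K0 hK] := dirichlet_spread_le r.
have [K1 K10 hK1] := obs_coercive.
pose CH := \sum_i n%:R * frob2 (H i).
have CH0 : 0 <= CH by apply: sumr_ge0 => i _; rewrite mulr_ge0 ?frob2_ge0.
exists (4 * N%:R * K1), (4 * N%:R * K1 * CH * K + 2 * N%:R * K).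
split; [by rewrite !mulr_ge0 | by rewrite addr_ge0 ?mulr_ge0 |] => z.
have D0 := dirichlet_ge0 z; have Q0 := obs_energy_ge0 z.
have hW : stacked_sqnorm z <= 2 * N%:R * dotc (z r) (z r) + 2 * N%:R * (K * dirichlet z).
  apply: (@le_trans _ _ (\sum_(i < N) (2 * dotc (z r) (z r) + 2 * (K * dirichlet z)))).
    apply: ler_sum => i _; rewrite -[z i](subrK (z r)) addrC.
    by apply: (le_trans (dotccD_le2 _ _)); have := hK z i; lra.
  by rewrite sumr_const card_ord -mulr_natl; lra.
have hr : \sum_i dotc (H i *m z r) (H i *m z r)
    <= 2 * obs_energy z + 2 * CH * (K * dirichlet z).
  rewrite /obs_energy /CH mulr_sumr mulr_sumr mulr_suml -big_split /=.
  apply: ler_sum => i _.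
  have -> : H i *m z r = H i *m z i + H i *m (z r - z i).
    by rewrite -mulmxDr addrC subrK.
  apply: (le_trans (dotccD_le2 _ _)); rewrite lerD2l.
  have := dotcc_mulmx_le (H i) (z r - z i); rewrite -opprB dotcc_opp.
  have := ler_wpM2l (mulr_ge0 (ler0n _ n) (frob2_ge0 (H i))) (hK z i).
  lra.
have hzr := le_trans (hK1 (z r)) (ler_wpM2l K10 hr).
have := ler_wpM2l (mulr_ge0 (ler0n _ 2) (ler0n _ N)) hzr.
lra.
Qed.

Lemma coercivity (c : R) : 0 < c -> exists2 lam, 0 < lam & coercive lam c.
Proof.
move=> c_gt0; have [A1 [A2 [A10 A20 hA]]] := stacked_sqnorm_le_obs_dirichlet.
have A2c_ge0 := divr_ge0 A20 (ltW c_gt0).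
have M_gt0 : 0 < 1 + A1 + A2 / c by lra.
exists (1 + A1 + A2 / c)^-1; first by rewrite invr_gt0.
move=> z; rewrite mulrC ler_pdivrMr //.
have A2c : A2 / c * c = A2 by rewrite divfK ?gt_eqF.
have Q0 := obs_energy_ge0 z; have D0 := dirichlet_ge0 z.
have : stacked_sqnorm z <= A1 * obs_energy z + A2 / c * c * dirichlet z.
  by rewrite A2c; exact: hA.
have := mulr_ge0 (mulr_ge0 A10 (ltW c_gt0)) D0.
have := mulr_ge0 A2c_ge0 Q0; have := mulr_ge0 (ltW c_gt0) D0.
lra.
Qed.

End Network.

(** * Perturbed contractions and step sizes *)

Section PerturbedContraction.
Variable R : realType.

Lemma contraction_series_le (M x : R ^nat) T :
  (forall t, (T <= t)%N -> [/\ 0 <= x t <= 1, 0 <= M t & M t.+1 <= (1 - x t) * M t]) ->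
  forall t, (T <= t)%N -> M t * (1 + (series x t - series x T)) <= M T.
Proof.
move=> hstep t /subnK <-; elim: (t - T)%N => [|k IH].
  by rewrite add0n subrr addr0 mulr1.
have [/andP[x0 x1] M0 hM] := hstep (k + T)%N (leq_addl _ _).
have A0 : 0 <= series x (k + T) - series x T.
  rewrite sub_series_geq ?leq_addl // big_nat_cond.
  by apply: sumr_ge0 => s /andP[/andP[/hstep[/andP[x_ge0 _] _ _] _] _].
rewrite addSn seriesSr; apply: le_trans IH.
set A := series x (k + T) - series x T in A0 *; set y := x (k + T) in x0 x1 hM *.
have -> : series x (k + T) + y - series x T = A + y by rewrite /A; ring.
have := ler_wpM2r (addr_ge0 (addr_ge0 ler01 A0) x0) hM.
have := mulr_ge0 (mulr_ge0 M0 x0) A0; have := mulr_ge0 M0 (sqr_ge0 y).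
lra.
Qed.

(* Above the level [e / 2] the perturbation [al t * eps t] is eventually
   dominated by the contraction, so [max (u t - e / 2) 0] decays like
   [1 / (1 + c * series al t)]. *)
Lemma perturbed_contraction_cvg0 (u al eps : R ^nat) (c : R) :
  0 < c -> (forall t, 0 <= u t) ->
  (\forall t \near \oo,
    0 <= c * al t <= 1 /\ u t.+1 <= (1 - c * al t) * u t + al t * eps t) ->
  eps @ \oo --> 0 -> series al @ \oo --> +oo -> u @ \oo --> 0.
Proof.
move=> c_gt0 u_ge0 step eps_cvg0 al_dvg; apply/cvgrPdist_le => e e_gt0.
have ce_gt0 : 0 < c * e / 2 by rewrite divr_gt0 ?mulr_gt0.
have [T _ hT] : \forall t \near \oo, (0 <= c * al t <= 1 /\
    u t.+1 <= (1 - c * al t) * u t + al t * eps t) /\ eps t <= c * e / 2.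
  near=> t; split; first by near: t.
  apply: le_trans (ler_norm _) _; rewrite -normrN -sub0r; near: t.
  by move/cvgrPdist_le : eps_cvg0; apply.
pose M t := Num.max (u t - e / 2) 0.
have M_ge0 t : 0 <= M t by rewrite /M le_max lexx orbT.
have uM t : u t - e / 2 <= M t by rewrite /M le_max lexx.
have decay := @contraction_series_le M (fun t => c * al t) T.
have {}decay : forall t, (T <= t)%N ->
    M t * (1 + c * (series al t - series al T)) <= M T.
  move=> t tT; have := decay _ t tT; rewrite !seriesEnat /= -!mulr_sumr mulrBr.
  apply=> s /hT[[/andP[x0 x1] hu] heps]; split; [exact/andP | exact: M_ge0 |].
  have al0 : 0 <= al s by rewrite -(pmulr_rge0 _ c_gt0).
  have hu' : u s.+1 - e / 2 <= (1 - c * al s) * (u s - e / 2).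
    by have := ler_wpM2l al0 heps; lra.
  rewrite {1}/M ge_max; apply/andP; split; last by rewrite mulr_ge0 // subr_ge0.
  by apply: le_trans hu' _; rewrite ler_wpM2l // subr_ge0.
have /cvgryPge/(_ (series al T + 2 * M T / (c * e))) S_big := al_dvg.
near=> t.
have tT : (T <= t)%N by near: t; exact: nbhs_infty_ge.
have hS : M T <= e / 2 * (c * (series al t - series al T)).
  have : 2 * M T / (c * e) <= series al t - series al T.
    by rewrite lerBrDl; near: t.
  move/(ler_wpM2l (ltW ce_gt0)).
  have -> : c * e / 2 * (2 * M T / (c * e)) = M T by field; rewrite ?gt_eqF.
  lra.
have := decay t tT; have := M_ge0 t; have := uM t.
have : 0 <= c * (series al t - series al T).
  rewrite mulr_ge0 ?(ltW c_gt0) // sub_series_geq // big_nat_cond.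
  apply: sumr_ge0 => s /andP[/andP[/hT[[/andP[x0 _] _] _] _] _].
  by rewrite -(pmulr_rge0 _ c_gt0).
rewrite sub0r normrN ger0_norm //; nra.
Unshelve. all: by end_near.
Qed.

End PerturbedContraction.

Section StepSize.
Variable R : realType.
Implicit Types c d p q : R.

Lemma step_size_gt0 c p t : 0 < c -> 0 < step_size c p t.
Proof. by move=> c_gt0; rewrite divr_gt0 ?powR_gt0. Qed.

Lemma step_sizeZ k c p t : k * step_size c p t = step_size (k * c) p t.
Proof. by rewrite /step_size mulrA. Qed.

Lemma step_sizeM c d p q t :
  step_size c p t * step_size d q t = step_size (c * d) (p + q) t.
Proof.
rewrite /step_size powRD ?pnatr_eq0 ?implybT // invfM.
by rewrite mulrACA.
Qed.

Lemma step_size_split (a b tau1 tau2 r : R) t : 0 < a ->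
  step_size b tau2 t * step_size 1 r t
    = step_size a tau1 t * step_size (b / a) (tau2 + r - tau1) t.
Proof.
move=> a_gt0; rewrite !step_sizeM mulr1 mulrCA divff ?gt_eqF // mulr1.
by congr step_size; ring.
Qed.

Lemma step_size_le c p q t : 0 <= c -> p <= q -> step_size c q t <= step_size c p t.
Proof.
move=> c_ge0 pq; rewrite ler_wpM2l // lef_pV2 ?posrE ?powR_gt0 //.
by rewrite ler_powR // ler1n.
Qed.

Lemma step_size_cvg0 c p : 0 < p -> step_size c p @ \oo --> 0.
Proof.
move=> p_gt0; apply/cvgrPdist_le => e e_gt0.
pose X := (`|c| / e) `^ p^-1.
have XpE : X `^ p = `|c| / e.
  by rewrite -powRrM mulVf ?gt_eqF // powRr1 // divr_ge0 // ltW.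
near=> t; have tp_gt0 : 0 < (t.+1)%:R `^ p by apply: powR_gt0; rewrite ltr0Sn.
rewrite sub0r normrN /step_size normrM normfV (ger0_norm (powR_ge0 _ _)) ler_pdivrMr //.
rewrite -ler_pdivrMl // mulrC -XpE; apply: ge0_ler_powR; rewrite ?nnegrE ?powR_ge0 //.
  exact: ltW.
apply: (@le_trans _ _ t%:R); last by rewrite ler_nat.
near: t; exact: nbhs_infty_ger.
Unshelve. all: by end_near.
Qed.

Lemma step_size_series_dvg c p : 0 < c -> 0 <= p <= 1 ->
  series (step_size c p) @ \oo --> +oo.
Proof.
move=> c_gt0 p01; apply/cvgryPge => A.
have riemann_dvg : series (riemannR p) @ \oo --> +oo.
  apply: nondecreasing_dvgn_lt; last exact: dvg_riemannR.
  by apply: nondecreasing_series => k _ _; rewrite ltW ?riemannR_gt0 //; case/andP: p01.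
have seriesE t : series (step_size c p) t = c * series (riemannR p) t.
  by rewrite !seriesEnat /= mulr_sumr.
near=> t; rewrite seriesE -ler_pdivrMl //; near: t.
by move/cvgryPge : riemann_dvg; apply.
Unshelve. all: by end_near.
Qed.

End StepSize.

(** * Consensus + innovations with a vanishing perturbation *)

Lemma cvg0_near_mul_le (R : realType) (f : R ^nat) (K e : R) :
  f @ \oo --> 0 -> 0 < e -> \forall t \near \oo, f t * K <= e.
Proof.
move=> f_cvg0 e_gt0; have d_gt0 : 0 < e / (`|K| + 1) by rewrite divr_gt0 ?ltr_wpDl.
move/cvgrPdist_le : f_cvg0 => /(_ _ d_gt0); apply: filterS => t.
rewrite sub0r normrN => ft_le; apply: le_trans (ler_norm _) _.
rewrite normrM; apply: le_trans (ler_wpM2r (normr_ge0 K) ft_le) _.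
by rewrite mulrAC ler_pdivrMr ?ltr_wpDl // ler_pM2l // lerDl.
Qed.

Section MeanError.
Variables (R : realType) (N n : nat) (m : 'I_N -> nat).
Variable H : forall i : 'I_N, 'M[R]_(m i, n).
Variable adj : rel 'I_N.
Hypothesis adj_sym : forall i j, adj i j = adj j i.
Hypothesis adj_connected : forall i j, connect adj i j.
Hypothesis gram_full_rank : \rank (\sum_(i < N) (H i)^T *m H i)%R = n.

Local Notation W := (@stacked_sqnorm R N n).

Lemma stacked_sqnorm_neighbour_sum_le (d : 'I_N -> 'cV[R]_n) (rr : R) :
  (forall j k, `|d j k 0| <= rr) ->
  W (fun i => \sum_(j | adj i j) d j) <= N%:R ^+ 3 * n%:R * rr ^+ 2.
Proof.
move=> d_le.
have dd_le j : dotc (d j) (d j) <= n%:R * rr ^+ 2.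
  apply: (@le_trans _ _ (\sum_(k < n) rr ^+ 2)).
    2: by rewrite sumr_const card_ord mulr_natl.
  apply: ler_sum => k _.
  rewrite -expr2 -(real_normK (num_real (d j k 0))).
  by have := normr_ge0 (d j k 0); have := d_le j k; nra.
apply: (@le_trans _ _ (\sum_(i < N) N%:R * (N%:R * (n%:R * rr ^+ 2)))); last first.
  by rewrite sumr_const card_ord -mulr_natl; lra.
apply: ler_sum => i _; apply: (le_trans (dotcc_sum_le _ _)); rewrite card_ord ler_wpM2l //.
apply: le_trans (ler_sum _ (fun j _ => dd_le j)) _.
apply: (@le_trans _ _ (\sum_(j < N) n%:R * rr ^+ 2)).
  rewrite [X in _ <= X](bigID (adj i)) /= lerDl.
  by apply: sumr_ge0 => j _; rewrite mulr_ge0 ?sqr_ge0.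
by rewrite sumr_const card_ord [X in _ <= X]mulr_natl.
Qed.

(* Young's inequality with weight [eta = al lam / 2] splits off the perturbation. *)
Lemma perturbed_step_le (lam c al be rr : R) z (del : 'I_N -> 'cV[R]_n) :
  coercive H adj lam c -> 0 < lam -> 0 < al -> 0 <= be ->
  al * gram_gain H <= 1 / 2 -> be * N%:R <= 1 / 4 -> 2 * c * al <= be ->
  al * lam <= 1 -> (forall j k, be * `|del j k 0| <= al * rr) ->
  W (fun i => z i - al *: gram H z i - be *: laplacian adj z i
              + be *: \sum_(j | adj i j) del j)
    <= (1 - lam / 2 * al) * W z + al * (3 * (N%:R ^+ 3 * n%:R) / lam * rr ^+ 2).
Proof.
move=> coer lam_gt0 al_gt0 be_ge0 al_small be_small c_le al_lam del_le.
set y := fun i => z i - al *: gram H z i - be *: laplacian adj z i.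
set D := fun i => \sum_(j | adj i j) be *: del j.
have -> : (fun i => y i + be *: \sum_(j | adj i j) del j) = (fun i => y i + D i).
  by apply/funext => i; rewrite /D scaler_sumr.
have y_le := stacked_sqnorm_contraction adj_sym z coer (ltW al_gt0) be_ge0
  al_small be_small c_le.
have D_le : W D <= N%:R ^+ 3 * n%:R * (al * rr) ^+ 2.
  by apply: stacked_sqnorm_neighbour_sum_le => j k; rewrite mxE normrM ger0_norm.
have eta_gt0 : 0 < al * lam / 2 by rewrite divr_gt0 ?mulr_gt0.
have young := stacked_sqnormD_le y D eta_gt0.
set K := N%:R ^+ 3 * n%:R * rr ^+ 2.
have K0 : 0 <= K by rewrite mulr_ge0 ?sqr_ge0.
have coefE : (1 + (al * lam / 2)^-1) * al ^+ 2 = al ^+ 2 + 2 * (al / lam).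
  by rewrite invf_div; field; rewrite !gt_eqF.
have al2_le : al ^+ 2 <= al / lam by rewrite ler_pdivlMr // expr2 -mulrA ger_pMr.
have D_term_le : (1 + (al * lam / 2)^-1) * W D <= al * (3 * K / lam).
  apply: le_trans (ler_wpM2l _ D_le) _; first by rewrite addr_ge0 ?invr_ge0 ?ltW.
  have -> : (1 + (al * lam / 2)^-1) * (N%:R ^+ 3 * n%:R * (al * rr) ^+ 2)
      = ((1 + (al * lam / 2)^-1) * al ^+ 2) * K by rewrite /K; ring.
  have -> : al * (3 * K / lam) = 3 * (al / lam) * K by field; rewrite gt_eqF.
  by rewrite coefE ler_wpM2r //; lra.
have Wz0 := stacked_sqnorm_ge0 z; have Wy0 := stacked_sqnorm_ge0 y.
have := ler_wpM2l (addr_ge0 ler01 (ltW eta_gt0)) y_le.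
have al_lam_ge0 := mulr_ge0 (ltW al_gt0) (ltW lam_gt0).
have := mulr_ge0 al_lam_ge0 al_lam_ge0.
rewrite (_ : 3 * (N%:R ^+ 3 * n%:R) / lam * rr ^+ 2 = 3 * K / lam); last first.
  by rewrite /K; field; rewrite gt_eqF.
nra.
Qed.

Lemma consensus_innovation_cvg0 (c : R) (al be r : R ^nat)
    (z del : nat -> 'I_N -> 'cV[R]_n) :
  0 < c -> (forall t, 0 < al t) -> (forall t, 0 <= be t) ->
  (forall t, 2 * c * al t <= be t) ->
  al @ \oo --> 0 -> be @ \oo --> 0 -> r @ \oo --> 0 -> series al @ \oo --> +oo ->
  (forall t j k, be t * `|del t j k 0| <= al t * r t) ->
  (forall t i, z t.+1 i = z t i - al t *: gram H (z t) i - be t *: laplacian adj (z t) i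
                         + be t *: \sum_(j | adj i j) del t j) ->
  W (z t) @[t --> \oo] --> 0.
Proof.
move=> c_gt0 al_gt0 be_ge0 c_le al_cvg0 be_cvg0 r_cvg0 al_dvg del_le z_rec.
have [lam lam_gt0 coer] := coercivity adj_sym adj_connected gram_full_rank c_gt0.
pose K := 3 * (N%:R ^+ 3 * n%:R) / lam.
apply: (@perturbed_contraction_cvg0 _ _ al (fun t => K * r t ^+ 2) (lam / 2)).
- by rewrite divr_gt0.
- by move=> t; exact: stacked_sqnorm_ge0.
- near=> t.
  have al_lam : al t * lam <= 1 by near: t; exact: cvg0_near_mul_le.
  split; first by rewrite mulr_ge0 ?divr_ge0 ?ltW //=; have := al_gt0 t; nra.
  have -> : z t.+1 = fun i => z t i - al t *: gram H (z t) i
      - be t *: laplacian adj (z t) i + be t *: \sum_(j | adj i j) del t j.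
    by apply/funext => i; exact: z_rec.
  apply: (perturbed_step_le (c := c) (rr := r t)) => //.
  + by near: t; exact: cvg0_near_mul_le.
  + by near: t; exact: cvg0_near_mul_le.
- rewrite -(mulr0 K) -(mulr0 0); apply: cvgM; first exact: cvg_cst.
  by under eq_fun do rewrite expr2; exact: cvgM.
- exact: al_dvg.
Unshelve. all: by end_near.
Qed.

End MeanError.

(** * Means of random column vectors *)

Section Mean.
Variables (d : measure_display) (T : measurableType d) (R : realType).
Variable P : probability T R.

Definition L1 (f : T -> R) := P.-integrable setT (EFin \o f).
(* [fine] makes [mean f] a junk [0] when [f] is not integrable. *)
Definition mean (f : T -> R) : R := fine ('E_P[f])%E.

Lemma L1_measurable f : L1 f -> measurable_fun setT f.
Proof. by move=> /measurable_int /measurable_EFinP. Qed.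

Lemma L1_cst c : L1 (fun=> c).
Proof. exact: finite_measure_integrable_cst. Qed.

Lemma L1D f g : L1 f -> L1 g -> L1 (fun w => f w + g w).
Proof.
by move=> f1 g1; apply: eq_integrable (integrableD measurableT f1 g1) => // w _.
Qed.

Lemma L1Z c f : L1 f -> L1 (fun w => c * f w).
Proof.
by move=> f1; apply: eq_integrable (integrableZl measurableT c f1) => // w _.
Qed.

Lemma L1_sum (I : Type) (s : seq I) (Q : pred I) (F : I -> T -> R) :
  (forall i, L1 (F i)) -> L1 (fun w => \sum_(i <- s | Q i) F i w).
Proof.
move=> F1; have := @integrable_sum _ _ _ P setT measurableT I s Q
  (fun i => EFin \o F i) (fun i _ => F1 i).
by apply: eq_integrable => // w _; rewrite /= sumEFin.
Qed.

Lemma L1_if (b : T -> bool) f g : measurable_fun setT b -> L1 f -> L1 g ->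
  L1 (fun w => if b w then f w else g w).
Proof.
move=> mb f1 g1.
apply: le_integrable (integrableD measurableT (integrable_abse f1) (integrable_abse g1)) => //.
  by apply/measurable_EFinP; apply: measurable_fun_ifT => //; exact: L1_measurable.
move=> w _ /=; rewrite lee_fin [X in _ <= X]ger0_norm ?addr_ge0 //.
by case: (b w); rewrite ?lerDl ?lerDr.
Qed.

Lemma L1_of_sq_mean (f : T -> R) (c : R) : measurable_fun setT f ->
  ('E_P[fun w => (f w * f w)%R] = c%:E)%E -> L1 f.
Proof.
move=> mf sq_mean.
have sq1 : L1 (fun w => f w * f w).
  apply/integrableP; split; first by apply/measurable_EFinP; exact: measurable_funM.
  under eq_integral do rewrite /= ger0_norm -?expr2 ?sqr_ge0 //.
  by move: sq_mean; rewrite unlock => ->; exact: ltry.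
(* [|f| <= 1 + f^2] *)
apply: le_integrable (L1D (L1_cst 1) sq1) => //; first exact/measurable_EFinP.
move=> w _ /=; rewrite lee_fin [X in _ <= X]ger0_norm ?addr_ge0 -?expr2 ?sqr_ge0 //.
by have := real_normK (num_real (f w)); have := normr_ge0 (f w); nra.
Qed.

Lemma L1_fin_num f : L1 f -> ('E_P[f])%E \is a fin_num.
Proof. by move=> f1; rewrite unlock integrable_fin_num. Qed.

Lemma meanE f : L1 f -> ('E_P[f])%E = (mean f)%:E.
Proof. by move=> /L1_fin_num/fineK. Qed.

Lemma mean_cst c : mean (fun=> c) = c.
Proof. by rewrite /mean (expectation_cst P c). Qed.

Lemma meanD f g : L1 f -> L1 g -> mean (fun w => f w + g w) = mean f + mean g.
Proof.
move=> f1 g1; rewrite /mean (expectationD (X := f) (Y := g)) ?fineD ?L1_fin_num //.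
all: exact/Lfun1_integrable.
Qed.

Lemma meanZ c f : L1 f -> mean (fun w => c * f w) = c * mean f.
Proof.
move=> f1; rewrite /mean (_ : (fun w => c * f w) = c \o* f); last first.
  by apply/funext => w; rewrite /GRing.mulr_fun mulrC.
by rewrite expectationZl ?fineM ?L1_fin_num //; exact/Lfun1_integrable.
Qed.

Lemma mean_sum (I : Type) (s : seq I) (Q : pred I) (F : I -> T -> R) :
  (forall i, L1 (F i)) ->
  mean (fun w => \sum_(i <- s | Q i) F i w) = \sum_(i <- s | Q i) mean (F i).
Proof.
move=> F1; elim: s => [|i s IH].
  by under eq_fun do rewrite big_nil; rewrite big_nil mean_cst.
under eq_fun do rewrite big_cons; rewrite big_cons.
by case: (Q i) => //; rewrite meanD ?IH //; exact: L1_sum.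
Qed.

Lemma mean_le f c : L1 f -> (forall w, f w <= c) -> mean f <= c.
Proof.
move=> f1 f_le; rewrite -lee_fin -meanE // unlock.
apply: le_trans (le_integral measurableT f1 (L1_cst c) _) _.
  by move=> w _; rewrite lee_fin.
by rewrite integral_cst //= probability_setT mule1.
Qed.

Lemma mean_abs_le f c : L1 f -> (forall w, `|f w| <= c) -> `|mean f| <= c.
Proof.
move=> f1 f_le; rewrite ler_norml; apply/andP; split; last first.
  by apply: mean_le => // w; exact: le_trans (ler_norm _) (f_le w).
rewrite lerNl -mulN1r -meanZ //; apply: mean_le => [|w]; first exact: L1Z.
by rewrite mulN1r lerNl; have := f_le w; rewrite ler_norml => /andP[].
Qed.

Definition cL1 p (F : T -> 'cV[R]_p) := forall k, L1 (fun w => F w k 0).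
Definition cmean p (F : T -> 'cV[R]_p) : 'cV[R]_p := \col_k mean (fun w => F w k 0).

Section ColumnMean.
Variable p : nat.
Implicit Types F G : T -> 'cV[R]_p.

Lemma eq_cL1 F G : (forall w, F w = G w) -> cL1 G -> cL1 F.
Proof. by move=> /funext ->. Qed.

Lemma eq_cmean F G : (forall w, F w = G w) -> cmean F = cmean G.
Proof. by move=> /funext ->. Qed.

Lemma cL1_cst (u : 'cV[R]_p) : cL1 (fun=> u).
Proof. by move=> k; exact: L1_cst. Qed.

Lemma cL1D F G : cL1 F -> cL1 G -> cL1 (fun w => F w + G w).
Proof.
by move=> F1 G1 k; under eq_fun do rewrite mxE; exact: L1D.
Qed.

Lemma cL1Z c F : cL1 F -> cL1 (fun w => c *: F w).
Proof. by move=> F1 k; under eq_fun do rewrite mxE; exact: L1Z. Qed.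

Lemma cL1B F G : cL1 F -> cL1 G -> cL1 (fun w => F w - G w).
Proof.
move=> F1 G1; have := cL1D F1 (cL1Z (-1) G1).
by under eq_fun do rewrite scaleN1r.
Qed.

Lemma cL1_mulmx q (M : 'M[R]_(q, p)) F : cL1 F -> cL1 (fun w => M *m F w).
Proof.
move=> F1 k; under eq_fun do rewrite mxE.
by apply: L1_sum => l; exact: L1Z.
Qed.

Lemma cL1_sum (I : finType) (Q : pred I) (F : I -> T -> 'cV[R]_p) :
  (forall i, cL1 (F i)) -> cL1 (fun w => \sum_(i | Q i) F i w).
Proof.
by move=> F1 k; under eq_fun do rewrite summxE; apply: L1_sum => i; exact: F1.
Qed.

Lemma cL1_if (b : T -> bool) F G : measurable_fun setT b -> cL1 F -> cL1 G ->
  cL1 (fun w => if b w then F w else G w).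
Proof.
move=> mb F1 G1 k; under eq_fun do rewrite (fun_if (fun u : 'cV_p => u k 0)).
exact: L1_if.
Qed.

Lemma cmean_cst (u : 'cV[R]_p) : cmean (fun=> u) = u.
Proof. by apply/matrixP => k j; rewrite !mxE mean_cst ord1. Qed.

Lemma cmeanD F G : cL1 F -> cL1 G -> cmean (fun w => F w + G w) = cmean F + cmean G.
Proof.
move=> F1 G1; apply/matrixP => k j; rewrite !mxE -meanD //.
by congr mean; apply/funext => w; rewrite mxE.
Qed.

Lemma cmeanZ c F : cL1 F -> cmean (fun w => c *: F w) = c *: cmean F.
Proof.
move=> F1; apply/matrixP => k j; rewrite !mxE -meanZ //.
by congr mean; apply/funext => w; rewrite mxE.
Qed.

Lemma cmeanB F G : cL1 F -> cL1 G -> cmean (fun w => F w - G w) = cmean F - cmean G.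
Proof.
move=> F1 G1; rewrite -scaleN1r -(cmeanZ _ G1) -(cmeanD F1 (cL1Z _ G1)).
by congr cmean; apply/funext => w; rewrite scaleN1r.
Qed.

Lemma cmean_mulmx q (M : 'M[R]_(q, p)) F : cL1 F -> cmean (fun w => M *m F w) = M *m cmean F.
Proof.
move=> F1; apply/matrixP => k j; rewrite !mxE.
under eq_fun do rewrite mxE.
rewrite mean_sum => [|l]; last exact: L1Z.
by apply: eq_bigr => l _; rewrite meanZ // mxE.
Qed.

Lemma cmean_sum (I : finType) (Q : pred I) (F : I -> T -> 'cV[R]_p) :
  (forall i, cL1 (F i)) -> cmean (fun w => \sum_(i | Q i) F i w) = \sum_(i | Q i) cmean (F i).
Proof.
move=> F1; apply/matrixP => k j; rewrite summxE !mxE.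
under eq_fun do rewrite summxE.
rewrite mean_sum => [|i]; last exact: F1.
by apply: eq_bigr => i _; rewrite mxE.
Qed.

End ColumnMean.

End Mean.

(** * The event-triggered estimator *)

Section EuclideanNorm.
Variable R : realType.

Lemma enorm_coord_le p (u : 'cV[R]_p) k : `|u k 0| <= enorm u.
Proof.
rewrite /enorm -sqrtr_sqr ler_sqrt; last by apply: sumr_ge0 => l _; exact: sqr_ge0.
by rewrite (bigD1 k) //= lerDl; apply: sumr_ge0 => l _; exact: sqr_ge0.
Qed.

Lemma enorm0 p : enorm (0 : 'cV[R]_p) = 0.
Proof. by rewrite /enorm big1 ?sqrtr0 // => k _; rewrite mxE expr0n. Qed.

Lemma enormN p (u : 'cV[R]_p) : enorm (- u) = enorm u.
Proof. by rewrite /enorm; congr Num.sqrt; apply: eq_bigr => k _; rewrite mxE sqrrN. Qed.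

End EuclideanNorm.

Section Estimator.
Variables (R : realType) (N n : nat) (m : 'I_N -> nat).
Variables (H : forall i : 'I_N, 'M[R]_(m i, n)) (adj : rel 'I_N) (rho : 'I_N -> R).
Variables (al be : nat -> R) (theta : 'cV[R]_n) (x0 : 'I_N -> 'cV[R]_n).
Variable v : nat -> forall i : 'I_N, 'cV[R]_(m i).

Local Notation est := (et_est H adj rho al be theta x0 v).

Lemma et_est_state t i : (est t.+1).1 i =
  (est t).1 i + al t *: ((H i)^T *m ((H i *m theta + v t i) - H i *m (est t).1 i))
  + be t *: \sum_(j < N | adj i j) ((est t).2 j - (est t).1 i).
Proof. by rewrite /=; case: (et_est _ _ _ _ _ _ _ _ t). Qed.

Lemma et_est_broadcast t i : (est t.+1).2 i =
  if step_size 1 (rho i) t.+1 < enorm ((est t.+1).1 i - (est t).2 i)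
  then (est t.+1).1 i else (est t).2 i.
Proof. by rewrite /=; case: (et_est _ _ _ _ _ _ _ _ t). Qed.

Lemma et_est_gap t i : enorm ((est t).2 i - (est t).1 i) <= step_size 1 (rho i) t.
Proof.
have thr_ge0 s : 0 <= step_size 1 (rho i) s by rewrite divr_ge0 ?powR_ge0.
case: t => [|t]; first by rewrite subrr enorm0 thr_ge0.
rewrite et_est_broadcast; case: ifPn => [_|]; first by rewrite subrr enorm0 thr_ge0.
by rewrite -opprB enormN leNgt.
Qed.

End Estimator.

Section MeanDynamics.
Variables (d : measure_display) (T : measurableType d) (R : realType).
Variable P : probability T R.
Variables (N n : nat) (m : 'I_N -> nat).
Variables (H : forall i : 'I_N, 'M[R]_(m i, n)) (adj : rel 'I_N) (rho : 'I_N -> R).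
Variables (al be : nat -> R) (theta : 'cV[R]_n) (x0 : 'I_N -> 'cV[R]_n).
Variable V : nat -> T -> forall i : 'I_N, 'cV[R]_(m i).
Hypothesis V_L1 : forall t i, cL1 P (fun w => V t w i).

Local Notation est w := (et_est H adj rho al be theta x0 (V ^~ w)).
Local Notation xbar t i := (cmean P (fun w => (est w t).1 i)).
Local Notation xhbar t i := (cmean P (fun w => (est w t).2 i)).

Lemma enorm_measurable p (F : T -> 'cV[R]_p) :
  cL1 P F -> measurable_fun setT (fun w => enorm (F w)).
Proof.
move=> F1; apply: (measurableT_comp (continuous_measurable_fun (@sqrt_continuous R))).
by apply: measurable_sum => k; apply: measurable_funX; exact: L1_measurable (F1 k).
Qed.

Local Ltac cL1_closure := repeat first
  [ match goal with h : forall _ : 'I_N, cL1 _ _ |- _ => apply: h end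
  | exact: cL1_cst | exact: (@V_L1 _ _) | apply: cL1B | apply: cL1D
  | apply: cL1Z | apply: cL1_mulmx | apply: cL1_sum | move=> ? ].

Lemma et_est_L1 t : (forall i, cL1 P (fun w => (est w t).1 i)) /\
                    (forall i, cL1 P (fun w => (est w t).2 i)).
Proof.
elim: t => [|t [x1 xh1]]; first by split => i; exact: cL1_cst.
have x1' i : cL1 P (fun w => (est w t.+1).1 i).
  apply: (eq_cL1 (fun w => et_est_state H adj rho al be theta x0 (V ^~ w) t i)).
  by cL1_closure.
split => // i.
apply: (eq_cL1 (fun w => et_est_broadcast H adj rho al be theta x0 (V ^~ w) t i)).
apply: cL1_if => //; apply: measurable_fun_ltr; first exact: measurable_cst.
exact/enorm_measurable/cL1B.
Qed.

Hypothesis V_mean0 : forall t i, cmean P (fun w => V t w i) = 0.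

Lemma et_est_mean_state t i : xbar t.+1 i =
  xbar t i + al t *: ((H i)^T *m (H i *m theta - H i *m xbar t i))
  + be t *: \sum_(j | adj i j) (xhbar t j - xbar t i).
Proof.
have [x1 xh1] := et_est_L1 t.
rewrite (eq_cmean P (fun w => et_est_state H adj rho al be theta x0 (V ^~ w) t i)).
rewrite cmeanD ?cmeanD ?cmeanZ ?cmean_mulmx ?cmeanB ?cmeanD ?cmean_cst ?V_mean0 ?addr0
  ?cmean_mulmx ?cmean_sum; try by cL1_closure.
by congr (_ + _ *: _); apply: eq_bigr => j _; rewrite cmeanB.
Qed.

Lemma et_est_mean_gap t j k : `|(xhbar t j - xbar t j) k 0| <= step_size 1 (rho j) t.
Proof.
have [x1 xh1] := et_est_L1 t.
rewrite -cmeanB // mxE; apply: mean_abs_le => [|w]; first exact: cL1B.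
exact/(le_trans (enorm_coord_le _ _))/et_est_gap.
Qed.

End MeanDynamics.

Lemma stacked_sqnorm_cvg0_coord (R : realType) N n (z : nat -> 'I_N -> 'cV[R]_n) i k :
  stacked_sqnorm (z t) @[t --> \oo] --> 0 -> z t i k 0 @[t --> \oo] --> 0.
Proof.
move=> /cvgrPdist_le W_cvg0; apply/cvgrPdist_le => e e_gt0.
apply: filterS (W_cvg0 _ (exprn_gt0 2 e_gt0)) => t; rewrite !sub0r !normrN => W_le.
have : z t i k 0 ^+ 2 <= e ^+ 2.
  apply: le_trans (dotcc_coord_le _ _) (le_trans _ (le_trans (ler_norm _) W_le)).
  apply: (@ler_sum_term _ _ xpredT (fun j => dotc (z t j) (z t j))) => // j _.
  exact: dotcc_ge0.
by rewrite -real_normK ?num_real //; have := normr_ge0 (z t i k 0); nra.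
Qed.

Section Unbiasedness.
Variables (d : measure_display) (T : measurableType d) (R : realType).
Variable P : probability T R.
Variables (N n : nat) (m : 'I_N -> nat).
Variables (H : forall i : 'I_N, 'M[R]_(m i, n)) (adj : rel 'I_N) (rho : 'I_N -> R).
Variables (theta : 'cV[R]_n) (x0 : 'I_N -> 'cV[R]_n).
Variable V : nat -> T -> forall i : 'I_N, 'cV[R]_(m i).
Variables a b tau1 tau2 : R.
Hypothesis adj_sym : forall i j, adj i j = adj j i.
Hypothesis adj_connected : forall i j, connect adj i j.
Hypothesis gram_full_rank : \rank (\sum_(i < N) (H i)^T *m H i)%R = n.
Hypotheses (a_gt0 : 0 < a) (b_gt0 : 0 < b) (tau2_gt0 : 0 < tau2).
Hypotheses (tau2_le_tau1 : tau2 <= tau1) (tau1_le1 : tau1 <= 1).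
Hypothesis rho_gt : forall j, tau1 - tau2 < rho j.
Hypothesis V_L1 : forall t i, cL1 P (fun w => V t w i).
Hypothesis V_mean0 : forall t i, cmean P (fun w => V t w i) = 0.

Local Notation al := (step_size a tau1).
Local Notation be := (step_size b tau2).
Local Notation est w := (et_est H adj rho al be theta x0 (V ^~ w)).
Local Notation xbar t i := (cmean P (fun w => (est w t).1 i)).
Local Notation xhbar t i := (cmean P (fun w => (est w t).2 i)).

Lemma et_est_mean_error_cvg0 :
  stacked_sqnorm (fun i => xbar t i - theta) @[t --> \oo] --> 0.
Proof.
have tau1_gt0 : 0 < tau1 by apply: lt_le_trans tau2_le_tau1.
pose r t := \sum_(j < N) step_size (b / a) (tau2 + rho j - tau1) t.
apply: (consensus_innovation_cvg0 adj_sym adj_connected gram_full_rank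
  (c := b / a / 2) (al := al) (be := be) (r := r)
  (del := fun t j => xhbar t j - xbar t j)).
- by rewrite !divr_gt0.
- by move=> t; exact: step_size_gt0.
- by move=> t; exact/ltW/step_size_gt0.
- move=> t; rewrite (_ : 2 * (b / a / 2) = b / a); last by field; rewrite gt_eqF.
  rewrite step_sizeZ divfK ?gt_eqF //.
  exact: step_size_le (ltW b_gt0) tau2_le_tau1.
- exact: step_size_cvg0.
- exact: step_size_cvg0.
- rewrite (_ : 0 = \sum_(j < N) (0 : R)); last by rewrite big1.
  apply: cvg_big => [|j _]; first exact: add_continuous.
  by apply: step_size_cvg0; have := rho_gt j; lra.
- by apply: step_size_series_dvg => //; rewrite ltW.
- move=> t j k; have be_ge0 := ltW (step_size_gt0 tau2 t b_gt0).
  apply: le_trans (ler_wpM2l be_ge0 (et_est_mean_gap H adj rho al be theta x0 V_L1 t j k)) _.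
  rewrite (step_size_split _ tau1 _ _ _ a_gt0); apply: ler_wpM2l.
    exact/ltW/step_size_gt0.
  apply: (@ler_sum_term _ _ xpredT (fun j => step_size (b / a) (tau2 + rho j - tau1) t)) => //.
  by move=> l _; exact/ltW/step_size_gt0/divr_gt0.
- by move=> t i; rewrite et_est_mean_state //; exact: consensus_innovation_error.
Qed.

Lemma et_est_L1_coord t i k : L1 P (fun w => (est w t).1 i k 0).
Proof. exact: (et_est_L1 _ _ _ _ _ _ _ V_L1 t).1 i k. Qed.

Lemma et_est_unbiased i k :
  ('E_P[fun w => (est w t).1 i k ord0] @[t --> \oo] --> (theta k ord0)%:E)%E.
Proof.
apply: cvg_EFin; first by near=> t; exact/L1_fin_num/et_est_L1_coord.
have -> : fine \o (fun t => 'E_P[fun w => (est w t).1 i k ord0])%E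
    = fun t => (xbar t i - theta) k 0 + theta k 0.
  by apply/funext => t; rewrite /= !mxE subrK.
rewrite -[X in _ --> X]add0r; apply: cvgD (cvg_cst _).
exact: (@stacked_sqnorm_cvg0_coord _ _ _ (fun t j => xbar t j - theta) i k
  et_est_mean_error_cvg0).
Unshelve. all: by end_near.
Qed.

End Unbiasedness.

Theorem theorem2 (R : realType) (d : measure_display) (T : measurableType d)
  (P : probability T R) (N n : nat) (m : 'I_N -> nat)
  (H : forall i : 'I_N, 'M[R]_(m i, n)) (adj : rel 'I_N)
  (theta : 'cV[R]_n) (x0 : 'I_N -> 'cV[R]_n)
  (V : nat -> T -> forall i : 'I_N, 'cV[R]_(m i))
  (Rcov : forall i : 'I_N, 'M[R]_(m i))
  (rho : 'I_N -> R) (a b tau1 tau2 eps1 : R) :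
  (* undirected graph without self-loops *)
  (forall i j, adj i j = adj j i) -> (forall i, ~~ adj i i) ->
  (* noise: measurable, i.i.d. over time, zero mean, covariance R_i *)
  (forall t i k, measurable_fun setT (fun w => V t w i k ord0)) ->
  mutually_independent_vecs P V ->
  identically_distributed_vecs P V ->
  (forall t i k, ('E_P[fun w => V t w i k ord0] = 0)%E) ->
  (forall t i k l, ('E_P[fun w => (V t w i k ord0 * V t w i l ord0)%R] = (Rcov i k l)%:E)%E) ->
  (* threshold exponents *)
  (forall i, 0 < rho i) ->
  (* (i) connected graph *)
  (forall i j, connect adj i j) ->
  (* (ii) G full rank *)
  \rank ((\sum_(i < N) (H i)^T *m H i)%R) = n ->
  (* (iii) step sizes *)
  0 < a -> 0 < b -> 0 < tau2 -> tau2 <= tau1 -> tau1 <= 1 ->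
  0 < eps1 ->
  (forall t, (\int[P]_w ((stacked_norm (V t w)) `^ (2 + eps1))%:E < +oo)%E) ->
  tau2 + 1 / (2 + eps1) < tau1 -> 1 / 2 < tau1 ->
  (* rho_0 = min_j rho_j > tau1 - tau2 *)
  (forall j, tau1 - tau2 < rho j) ->
  forall (i : 'I_N) (k : 'I_n),
    let X := fun t w =>
      (et_est H adj rho (step_size a tau1) (step_size b tau2) theta x0
              (V ^~ w) t).1 i k ord0 in
    (forall t, P.-integrable setT (fun w => (X t w)%:E)) /\
    ('E_P[X t] @[t --> \oo] --> (theta k ord0)%:E)%E.
Proof.
move=> adj_sym _ V_meas _ _ V_mean V_cov _ adj_connected gram_full_rank a_gt0 b_gt0
  tau2_gt0 tau2_le_tau1 tau1_le1 _ _ _ _ rho_gt i k X.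
have V_L1 t j : cL1 P (fun w => V t w j).
  by move=> l; exact: L1_of_sq_mean (V_meas t j l) (V_cov t j l l).
have V_mean0 t j : cmean P (fun w => V t w j) = 0.
  by apply/matrixP => l q; rewrite !mxE /mean V_mean.
split=> [t|]; first exact: et_est_L1_coord.
exact: et_est_unbiased.
Qed.
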